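(* Let $X$ be a gamble, $I=[\inf X,\sup X]$, $\phi:I\to\mathbb{R}$ convex and $\psi:I\to\mathbb{R}$ concave. Let $\underline{P}$ be a 2-coherent lower prevision defined on a set of gambles containing $X$ and the other gambles involved (e.g. on all gambles), with conjugate $\overline{P}$. Define $x_L=l(\underline{P}(X))$, $x_U=u(\underline{P}(X))$, $z_L=l(\overline{P}(X))$, $z_U=u(\overline{P}(X))$. (a1) If $\inf X\le x_L<x_U\le\sup X$, then $$\underline{P}(\psi(X))\le\psi(x_U)\frac{\underline{P}(X)-x_L}{x_U-x_L}+\psi(x_L)\Big(1-\frac{\underline{P}(X)-x_L}{x_U-x_L}\Big)\le\psi(\underline{P}(X)).$$ (a2) If $\inf X\le z_L<z_U\le\sup X$ and $\psi(z_L)\le\psi(z_U)$, then $$\overline{P}(\psi(X))\le\psi(z_U)\frac{\overline{P}(X)-z_L}{z_U-z_L}+\psi(z_L)\Big(1-\frac{\overline{P}(X)-z_L}{z_U-z_L}\Big)\le\psi(\overline{P}(X)).$$ (b1) If $\inf X\le z_L<z_U\le\sup X$, then $$\overline{P}(\phi(X))\ge\phi(z_U)\frac{\overline{P}(X)-z_L}{z_U-z_L}+\phi(z_L)\Big(1-\frac{\overline{P}(X)-z_L}{z_U-z_L}\Big)\ge\phi(\overline{P}(X)).$$ (b2) If $\inf X\le x_L<x_U\le\sup X$ and $\phi(x_L)\le\phi(x_U)$, then $$\underline{P}(\phi(X))\ge\phi(x_U)\frac{\underline{P}(X)-x_L}{x_U-x_L}+\phi(x_L)\Big(1-\frac{\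underline{P}(X)-x_L}{x_U-x_L}\Big)\ge\phi(\underline{P}(X)).$$
   Context: $\Pi$ is a partition of the sure event into pairwise disjoint non-impossible events; a gamble is a bounded map $X:\Pi\to\mathbb{R}$ with image set $Im(X)=\{X(\omega):\omega\in\Pi\}$; $f(X)$ denotes $\omega\mapsto f(X(\omega))$. For $k\in[\inf X,\sup X]$, $l(k)=\sup\{x\in Im(X):x\le k\}$ and $u(k)=\inf\{x\in Im(X):x\ge k\}$. A lower prevision $\underline{P}:\mathcal{D}\to\mathbb{R}$ is 2-coherent iff for all $X_0,X_1\in\mathcal{D}$, $s_1\ge 0$, $s_0\in\mathbb{R}$, $\sup[s_1(X_1-\underline{P}(X_1))-s_0(X_0-\underline{P}(X_0))]\ge 0$; its conjugate is $\overline{P}(Y)=-\underline{P}(-Y)$. *)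

From HB Require Import structures.
From mathcomp Require Import all_boot all_order all_algebra.
From mathcomp Require Import all_classical all_reals.
Set Implicit Arguments. Unset Strict Implicit. Unset Printing Implicit Defensive.
Import Order.TTheory GRing.Theory Num.Theory.
Local Open Scope classical_set_scope.
Local Open Scope ring_scope.

Definition gamble (R : realType) (Omega : Type) (X : Omega -> R) : Prop :=
  exists M : R, forall w, `|X w| <= M.

Definition gsup (R : realType) (Omega : Type) (X : Omega -> R) : R := sup (range X).
Definition ginf (R : realType) (Omega : Type) (X : Omega -> R) : R := inf (range X).

Definition lpt (R : realType) (Omega : Type) (X : Omega -> R) (k : R) : R :=
  sup [set x | range X x /\ x <= k].
Definition upt (R : realType) (Omega : Type) (X : Omega -> R) (k : R) : R :=
  inf [set x | range X x /\ k <= x].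

Definition two_coherent (R : realType) (Omega : Type)
    (D : set (Omega -> R)) (P : (Omega -> R) -> R) : Prop :=
  forall X0 X1, D X0 -> D X1 -> forall s1 s0 : R, 0 <= s1 ->
    0 <= sup (range (fun w => s1 * (X1 w - P X1) - s0 * (X0 w - P X0))).

Definition upper (R : realType) (Omega : Type) (P : (Omega -> R) -> R)
    (Y : Omega -> R) : R := - P (fun w => - Y w).

Definition convex_on (R : realType) (I : set R) (f : R -> R) : Prop :=
  forall x y t, I x -> I y -> 0 <= t -> t <= 1 ->
    f (t * x + (1 - t) * y) <= t * f x + (1 - t) * f y.
Definition concave_on (R : realType) (I : set R) (f : R -> R) : Prop :=
  forall x y t, I x -> I y -> 0 <= t -> t <= 1 ->
    t * f x + (1 - t) * f y <= f (t * x + (1 - t) * y).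

From HB Require Import structures.
From mathcomp Require Import all_boot all_order all_algebra.
From mathcomp Require Import all_classical all_reals.
From mathcomp Require Import ring lra.
Import Order.TTheory GRing.Theory Num.Theory.
Set Implicit Arguments. Unset Strict Implicit. Unset Printing Implicit Defensive.
Local Open Scope classical_set_scope.
Local Open Scope ring_scope.

(* Let [xL, xU] be the gap of Im X around P X: no value of X lies strictly
   between xL and xU.  A concave psi lies below its chord over [xL, xU]
   outside that interval, hence psi (X w) is bounded by an affine function of
   X w for every w.  Two-coherence transports such a pointwise affine bound to
   the same affine bound in P X; for the conjugate upper prevision, or for
   minorants, the slope of the chord must be nonnegative, which is what the
   monotonicity hypotheses of (a2) and (b2) provide.  The chord evaluated at
   P X is the middle term, and concavity between xL and xU compares it with
   psi (P X).  Convex phi is handled through -phi. *)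

Definition chord (R : fieldType) (f : R -> R) (a b x : R) : R :=
  f a + (f b - f a) / (b - a) * (x - a).

Lemma chordN (R : fieldType) (f : R -> R) a b x :
  chord (fun y => - f y) a b x = - chord f a b x.
Proof. rewrite /chord; ring. Qed.

Lemma mulr_chord (R : fieldType) (f : R -> R) a b x : a != b ->
  (b - a) * chord f a b x = (b - x) * f a + (x - a) * f b.
Proof. by move=> ab; rewrite /chord; field; rewrite subr_eq0 eq_sym. Qed.

Lemma chord_interp (R : fieldType) (f : R -> R) a b x : a != b ->
  f b * ((x - a) / (b - a)) + f a * (1 - (x - a) / (b - a)) = chord f a b x.
Proof. by move=> ab; rewrite /chord; field; rewrite subr_eq0 eq_sym. Qed.

Section Chords.
Variables (R : realType) (I : set R).

Lemma concave_on_opp (f : R -> R) :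
  convex_on I f -> concave_on I (fun x => - f x).
Proof. by move=> cf x y t Ix Iy t0 t1; have := cf x y t Ix Iy t0 t1; lra. Qed.

Lemma concave_three_point (f : R -> R) x y z : concave_on I f ->
  I x -> I y -> x < y -> x <= z <= y ->
  (y - z) * f x + (z - x) * f y <= (y - x) * f z.
Proof.
move=> cf Ix Iy xy /andP[xz zy]; have yx0 : 0 < y - x by rewrite subr_gt0.
have yx : y - x != 0 by rewrite gt_eqF.
pose t := (y - z) / (y - x).
have t0 : 0 <= t by apply: divr_ge0; lra.
have t1 : t <= 1 by rewrite ler_pdivrMr // mul1r; lra.
have -> : (y - z) * f x + (z - x) * f y = (y - x) * (t * f x + (1 - t) * f y).
  by rewrite /t; field.
have -> : z = t * x + (1 - t) * y by rewrite /t; field.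
by rewrite ler_pM2l //; exact: cf.
Qed.

Lemma chord_le_concave (f : R -> R) a b x : concave_on I f ->
  I a -> I b -> a < b -> a <= x <= b -> chord f a b x <= f x.
Proof.
move=> cf Ia Ib ab axb; have ba : 0 < b - a by rewrite subr_gt0.
by rewrite -(ler_pM2l ba) mulr_chord ?lt_eqF //; exact: concave_three_point.
Qed.

Lemma concave_le_chord_outside (f : R -> R) a b x : concave_on I f ->
  I a -> I b -> I x -> a < b -> x <= a \/ b <= x -> f x <= chord f a b x.
Proof.
move=> cf Ia Ib Ix ab xab; have ba : 0 < b - a by rewrite subr_gt0.
rewrite -(ler_pM2l ba) mulr_chord ?lt_eqF //.
case: xab => [xa|bx].
- have : (b - a) * f x + (a - x) * f b <= (b - x) * f a.
    by apply: concave_three_point; rewrite ?xa ?(ltW ab) ?(le_lt_trans xa ab).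
  lra.
- have : (x - b) * f a + (b - a) * f x <= (x - a) * f b.
    by apply: concave_three_point; rewrite ?bx ?(ltW ab) ?(lt_le_trans ab bx).
  lra.
Qed.

Lemma convex_le_chord (f : R -> R) a b x : convex_on I f ->
  I a -> I b -> a < b -> a <= x <= b -> f x <= chord f a b x.
Proof.
move=> /concave_on_opp cf Ia Ib ab axb.
by have := chord_le_concave cf Ia Ib ab axb; rewrite chordN lerN2.
Qed.

Lemma chord_le_convex_outside (f : R -> R) a b x : convex_on I f ->
  I a -> I b -> I x -> a < b -> x <= a \/ b <= x -> chord f a b x <= f x.
Proof.
move=> /concave_on_opp cf Ia Ib Ix ab xab.
by have := concave_le_chord_outside cf Ia Ib Ix ab xab; rewrite chordN lerN2.
Qed.

End Chords.

Section ImagePoints.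
Variables (R : realType) (Omega : Type) (X : Omega -> R).

Lemma gamble_in_range w : gamble X -> ginf X <= X w <= gsup X.
Proof.
move=> [M hM]; have XM v : - M <= X v <= M by rewrite -ler_norml.
apply/andP; split.
- by apply: ge_inf; [exists (- M) => _ [v _ <-]; case/andP: (XM v) | exists w].
- by apply: ub_le_sup; [exists M => _ [v _ <-]; case/andP: (XM v) | exists w].
Qed.

Lemma le_lpt w k : X w <= k -> X w <= lpt X k.
Proof. by move=> wk; apply: ub_le_sup; [exists k => y [_] | split => //; exists w]. Qed.

Lemma upt_le w k : k <= X w -> upt X k <= X w.
Proof. by move=> kw; apply: ge_inf; [exists k => y [_] | split => //; exists w]. Qed.

Lemma lpt_upt_gap w k : X w <= lpt X k \/ upt X k <= X w.
Proof.
by case: (lerP (X w) k) => h; [left; exact: le_lpt | right; exact/upt_le/ltW].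
Qed.

Lemma lpt_le k : ginf X <= lpt X k -> lpt X k < upt X k -> lpt X k <= k.
Proof.
move=> hinf hlt.
have [[x Ax]|noA] := pselect ([set x | range X x /\ x <= k] !=set0).
  by apply: ge_sup => [|y []//]; exists x.
have A0 : [set x | range X x /\ x <= k] = set0.
  by apply/seteqP; split => // x Ax; apply: noA; exists x.
have B : [set x | range X x /\ k <= x] = range X.
  apply/seteqP; split => [x []//|x Rx]; split => //.
  by case: (lerP k x) => // /ltW xk; exfalso; apply: noA; exists x.
move: hinf hlt; rewrite /lpt /upt /ginf A0 B sup0 => h1.
by move=> /(le_lt_trans h1); rewrite ltxx.
Qed.

Lemma le_upt k : lpt X k < upt X k -> upt X k <= gsup X -> k <= upt X k.
Proof.
move=> hlt hsup.
have [[x Bx]|noB] := pselect ([set x | range X x /\ k <= x] !=set0).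
  by apply: lb_le_inf => [|y []//]; exists x.
have B0 : [set x | range X x /\ k <= x] = set0.
  by apply/seteqP; split => // x Bx; apply: noB; exists x.
have A : [set x | range X x /\ x <= k] = range X.
  apply/seteqP; split => [x []//|x Rx]; split => //.
  by case: (lerP x k) => // /ltW kx; exfalso; apply: noB; exists x.
move: hlt hsup; rewrite /lpt /upt /gsup B0 A inf0 => h1.
by move=> /(lt_le_trans h1); rewrite ltxx.
Qed.

End ImagePoints.

Section TwoCoherentBounds.
Variables (R : realType) (Omega : Type) (D : set (Omega -> R)).
Variable P : (Omega -> R) -> R.
Hypotheses (Omega_ne : inhabited Omega) (hcoh : two_coherent D P).

Lemma two_coherent_le X0 X1 s1 s0 c : D X0 -> D X1 -> 0 <= s1 ->
  (forall w, s1 * X1 w - s0 * X0 w <= c) -> s1 * P X1 - s0 * P X0 <= c.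
Proof.
move=> D0 D1 s1_ge0 hc.
suff : sup (range (fun w => s1 * (X1 w - P X1) - s0 * (X0 w - P X0)))
    <= c - (s1 * P X1 - s0 * P X0).
  by have := hcoh D0 D1 s0 s1_ge0; lra.
apply: ge_sup => [|_ [w _ <-]]; first by case: Omega_ne => w; eexists; exists w.
by have := hc w; lra.
Qed.

Lemma lower_le_affine X Y c s x0 : D X -> D Y ->
  (forall w, Y w <= c + s * (X w - x0)) -> P Y <= c + s * (P X - x0).
Proof.
move=> DX DY hY; suff : 1 * P Y - s * P X <= c - s * x0 by lra.
by apply: two_coherent_le => // w; have := hY w; lra.
Qed.

Lemma lower_ge_affine X Y c s x0 : D X -> D Y -> 0 <= s ->
  (forall w, c + s * (X w - x0) <= Y w) -> c + s * (P X - x0) <= P Y.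
Proof.
move=> DX DY s_ge0 hY; suff : s * P X - 1 * P Y <= s * x0 - c by lra.
by apply: two_coherent_le => // w; have := hY w; lra.
Qed.

Lemma upper_le_affine X Y c s x0 :
  D (fun w => - X w) -> D (fun w => - Y w) -> 0 <= s ->
  (forall w, Y w <= c + s * (X w - x0)) -> upper P Y <= c + s * (upper P X - x0).
Proof.
move=> DNX DNY s_ge0 hY.
suff : - c + s * (P (fun w => - X w) - - x0) <= P (fun w => - Y w).
  by rewrite /upper; lra.
by apply: lower_ge_affine => // w; have := hY w; lra.
Qed.

Lemma upper_ge_affine X Y c s x0 : D (fun w => - X w) -> D (fun w => - Y w) ->
  (forall w, c + s * (X w - x0) <= Y w) -> c + s * (upper P X - x0) <= upper P Y.
Proof.
move=> DNX DNY hY.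
suff : P (fun w => - Y w) <= - c + s * (P (fun w => - X w) - - x0).
  by rewrite /upper; lra.
by apply: lower_le_affine => // w; have := hY w; lra.
Qed.

Variables (X : Omega -> R) (I : set R) (a b : R).
Hypotheses (IX : forall w, I (X w)) (Ia : I a) (Ib : I b) (ab : a < b).
Hypothesis gapX : forall w, X w <= a \/ b <= X w.

Let slope_ge0 (f : R -> R) : f a <= f b -> 0 <= (f b - f a) / (b - a).
Proof. by move=> fab; apply: divr_ge0; rewrite subr_ge0 // ltW. Qed.

Lemma lower_concave_le_chord psi : concave_on I psi ->
  D X -> D (fun w => psi (X w)) -> P (fun w => psi (X w)) <= chord psi a b (P X).
Proof.
move=> cpsi DX Dpsi; apply: lower_le_affine => // w.
exact: concave_le_chord_outside cpsi Ia Ib (IX w) ab (gapX w).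
Qed.

Lemma upper_concave_le_chord psi : concave_on I psi -> psi a <= psi b ->
  D (fun w => - X w) -> D (fun w => - psi (X w)) ->
  upper P (fun w => psi (X w)) <= chord psi a b (upper P X).
Proof.
move=> cpsi psiab DNX DNpsi; apply: upper_le_affine; rewrite ?slope_ge0 // => w.
exact: concave_le_chord_outside cpsi Ia Ib (IX w) ab (gapX w).
Qed.

Lemma chord_le_upper_convex phi : convex_on I phi ->
  D (fun w => - X w) -> D (fun w => - phi (X w)) ->
  chord phi a b (upper P X) <= upper P (fun w => phi (X w)).
Proof.
move=> cphi DNX DNphi; apply: upper_ge_affine => // w.
exact: chord_le_convex_outside cphi Ia Ib (IX w) ab (gapX w).
Qed.

Lemma chord_le_lower_convex phi : convex_on I phi -> phi a <= phi b ->
  D X -> D (fun w => phi (X w)) -> chord phi a b (P X) <= P (fun w => phi (X w)).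
Proof.
move=> cphi phiab DX Dphi; apply: lower_ge_affine; rewrite ?slope_ge0 // => w.
exact: chord_le_convex_outside cphi Ia Ib (IX w) ab (gapX w).
Qed.

End TwoCoherentBounds.

Unset Implicit Arguments.

Theorem theorem5 (R : realType) (Omega : Type) (Omega_ne : inhabited Omega)
  (D : set (Omega -> R)) (P : (Omega -> R) -> R)
  (X : Omega -> R) (phi psi : R -> R)
  (hD : forall Y, D Y -> gamble Y)
  (hcoh : two_coherent D P)
  (hX : D X) (hNX : D (fun w => - X w))
  (hpsi : D (fun w => psi (X w))) (hNpsi : D (fun w => - psi (X w)))
  (hphi : D (fun w => phi (X w))) (hNphi : D (fun w => - phi (X w)))
  (hphic : convex_on [set x | ginf X <= x <= gsup X] phi)
  (hpsic : concave_on [set x | ginf X <= x <= gsup X] psi) :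
  let xL := lpt X (P X) in let xU := upt X (P X) in
  let zL := lpt X (upper P X) in let zU := upt X (upper P X) in
  let a := (P X - xL) / (xU - xL) in
  let b := (upper P X - zL) / (zU - zL) in
  (* (a1) *)
  (ginf X <= xL -> xL < xU -> xU <= gsup X ->
     P (fun w => psi (X w)) <= psi xU * a + psi xL * (1 - a) /\
     psi xU * a + psi xL * (1 - a) <= psi (P X)) /\
  (* (a2) *)
  (ginf X <= zL -> zL < zU -> zU <= gsup X -> psi zL <= psi zU ->
     upper P (fun w => psi (X w)) <= psi zU * b + psi zL * (1 - b) /\
     psi zU * b + psi zL * (1 - b) <= psi (upper P X)) /\
  (* (b1) *)
  (ginf X <= zL -> zL < zU -> zU <= gsup X ->
     phi zU * b + phi zL * (1 - b) <= upper P (fun w => phi (X w)) /\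
     phi (upper P X) <= phi zU * b + phi zL * (1 - b)) /\
  (* (b2) *)
  (ginf X <= xL -> xL < xU -> xU <= gsup X -> phi xL <= phi xU ->
     phi xU * a + phi xL * (1 - a) <= P (fun w => phi (X w)) /\
     phi (P X) <= phi xU * a + phi xL * (1 - a)).
Proof.
move=> xL xU zL zU a b; rewrite {}/a {}/b.
set I := [set x | ginf X <= x <= gsup X] in hphic hpsic *.
have IX w : I (X w) by exact: gamble_in_range (hD _ hX).
have bracket k : ginf X <= lpt X k -> lpt X k < upt X k -> upt X k <= gsup X ->
    [/\ I (lpt X k), I (upt X k), lpt X k <= k <= upt X k
      & forall w, X w <= lpt X k \/ upt X k <= X w].
  move=> h1 h2 h3; have := lpt_le h1 h2; have := le_upt h2 h3.
  rewrite /I /=; split=> [|||w]; try exact: lpt_upt_gap; apply/andP; split; lra.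
split; [|split; [|split]] => h1 h2 h3 *;
  have [IL IU kLU gap] := bracket _ h1 h2 h3;
  rewrite !chord_interp ?(lt_eqF h2) //; split.
- by apply: (lower_concave_le_chord Omega_ne hcoh IX IL IU h2 gap).
- exact: chord_le_concave hpsic IL IU h2 kLU.
- by apply: (upper_concave_le_chord Omega_ne hcoh IX IL IU h2 gap).
- exact: chord_le_concave hpsic IL IU h2 kLU.
- by apply: (chord_le_upper_convex Omega_ne hcoh IX IL IU h2 gap).
- exact: convex_le_chord hphic IL IU h2 kLU.
- by apply: (chord_le_lower_convex Omega_ne hcoh IX IL IU h2 gap).
- exact: convex_le_chord hphic IL IU h2 kLU.
Qed.
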